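(* Consider a Clifford circuit $C=U_d\cdots U_1$ of depth $d$ consisting of nearest-neighbor two-qubit Clifford gates on qubits located at the sites of a $D$-dimensional lattice, and let $C_t=U_t\cdots U_1$ ($C_0=I$). For any error configuration $b$, i.e. any subset of noise locations $(i,t)$ (qubit $i$, after layer $t$), let $M_b$ be the set of Pauli operators $C_t^\dagger X_iC_t$ and $C_t^\dagger Z_iC_t$ over all $(i,t)\in b$, and let $\langle M_b\rangle$ be the group they generate. Partition the lattice into hypercubic sublattices of side length $2d$ and let $G=(V,E)$ be the graph whose vertices are the sublattices, with two sublattices joined by an edge if they are adjacent (including diagonally adjacent). Let $A\subseteq V$ be the largest connected component in $G$ such that each sublattice of $A$ contains at least one non-depolarized qubit. Then there exists a Pauli operator $s$ in the centralizer $\mathsf C(\langle M_b\rangle)$ whose support meets at least half of the sublattices in $A$ and which has no support outside of (the qubits of) $A$.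
   Context: A qubit $i$ is depolarized (for configuration $b$) if both $X_i$ and $Z_i$ belong to $\langle M_b\rangle$, and non-depolarized otherwise; here $X_i$ ($Z_i$) denotes $X$ ($Z$) on qubit $i$ and identity elsewhere. The centralizer $\mathsf C(H)$ of a group $H$ of Pauli operators is the set of (phaseless) Pauli operators commuting with every element of $H$. The support of a Pauli operator is the set of qubits on which it acts non-trivially. *)

From HB Require Import structures.
From mathcomp Require Import all_boot.
Set Implicit Arguments. Unset Strict Implicit. Unset Printing Implicit Defensive.

Section Lattice.
Variables (D L K : nat).

(* Qubits sit on the sites of the D-dimensional lattice {0..L-1}^D (open boundaries). *)
Definition site := {ffun 'I_D -> 'I_L}.

(* Phaseless Pauli operators: for every qubit, its (x,z) bits. *)
Definition pauli := {ffun site -> bool * bool}.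
Definition pid : pauli := [ffun => (false, false)].
Definition pmul (P R : pauli) : pauli :=
  [ffun q => ((P q).1 (+) (R q).1, (P q).2 (+) (R q).2)].
Definition sympl (P R : pauli) : bool :=
  \big[addb/false]_(q : site) (((P q).1 && (R q).2) (+) ((P q).2 && (R q).1)).
Definition pcommute (P R : pauli) : bool := ~~ sympl P R.
Definition supp (P : pauli) : {set site} := [set q | P q != (false, false)].
Definition Xop (i : site) : pauli := [ffun q => (q == i, false)].
Definition Zop (i : site) : pauli := [ffun q => (false, q == i)].

Inductive gen (S : pauli -> Prop) : pauli -> Prop :=
| gen_id : gen S pid
| gen_gen P : S P -> gen S P
| gen_mul P R : gen S P -> gen S R -> gen S (pmul P R).

Definition in_centralizer (H : pauli -> Prop) (s : pauli) : Prop :=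
  forall P, H P -> pcommute s P.

Definition nn (q r : site) : bool :=
  [exists j, (((nat_of_ord (q j)).+1 == nat_of_ord (r j))
              || ((nat_of_ord (r j)).+1 == nat_of_ord (q j)))
             && [forall k, (k != j) ==> (q k == r k)]].

(* two-qubit phaseless Paulis and the symplectic action of two-qubit Cliffords *)
Definition pauli2 := ((bool * bool) * (bool * bool))%type.
Definition add1 (a c : bool * bool) := (a.1 (+) c.1, a.2 (+) c.2).
Definition add2 (u v : pauli2) : pauli2 := (add1 u.1 v.1, add1 u.2 v.2).
Definition sym1 (a c : bool * bool) := (a.1 && c.2) (+) (a.2 && c.1).
Definition sym2 (u v : pauli2) := sym1 u.1 v.1 (+) sym1 u.2 v.2.
Definition clifford2 (f : pauli2 -> pauli2) : Prop :=
  [/\ forall u v, f (add2 u v) = add2 (f u) (f v),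
      forall u v, sym2 (f u) (f v) = sym2 u v & bijective f].

(* a gate: qubits gq1, gq2 and the map P |-> U^dagger P U on their Paulis *)
Record gate := Gate { gq1 : site; gq2 : site; gmap : pauli2 -> pauli2 }.
Definition valid_gate (g : gate) : Prop := nn (gq1 g) (gq2 g) /\ clifford2 (gmap g).
Definition gate_support (g : gate) : {set site} := [set gq1 g; gq2 g].
Definition gate_act (g : gate) (P : pauli) : pauli :=
  let w := gmap g (P (gq1 g), P (gq2 g)) in
  [ffun q => if q == gq1 g then w.1 else if q == gq2 g then w.2 else P q].

Fixpoint all_valid (l : seq gate) : Prop :=
  if l is g :: l' then valid_gate g /\ all_valid l' else True.
Definition valid_layer (l : seq gate) : Prop :=
  all_valid l /\ pairwise (fun g h => [disjoint gate_support g & gate_support h]) l.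
Definition layer_act (l : seq gate) (P : pauli) : pauli := foldr gate_act P l.

(* circuit: layers U 1, ..., U d;  heis U t P = C_t^dagger P C_t, C_t = U_t ... U_1 *)
Definition valid_circuit (d : nat) (U : nat -> seq gate) : Prop :=
  forall t, 1 <= t <= d -> valid_layer (U t).
Fixpoint heis (U : nat -> seq gate) (t : nat) (P : pauli) : pauli :=
  if t is t'.+1 then heis U t' (layer_act (U t'.+1) P) else P.

Definition Mb (d : nat) (U : nat -> seq gate) (b : {set site * 'I_d.+1}) (P : pauli) : Prop :=
  exists i (t : 'I_d.+1), (i, t) \in b /\
    (P = heis U t (Xop i) \/ P = heis U t (Zop i)).

Definition depolarized d U (b : {set site * 'I_d.+1}) (i : site) : Prop :=
  gen (Mb U b) (Xop i) /\ gen (Mb U b) (Zop i).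

(* sublattices (blocks) of side s, indexed by {0..K-1}^D *)
Definition block := {ffun 'I_D -> 'I_K}.
Definition inblock (s : nat) (v : block) (q : site) : bool :=
  [forall j, (q j) %/ s == nat_of_ord (v j)].
Definition badj (v w : block) : bool :=
  (v != w) && [forall j, (nat_of_ord (v j) <= (w j).+1) && (nat_of_ord (w j) <= (v j).+1)].

Definition good_block d U (b : {set site * 'I_d.+1}) (s : nat) (v : block) : Prop :=
  exists q, inblock s v q /\ ~ depolarized U b q.

Definition is_component (good : block -> Prop) (A : {set block}) : Prop :=
  [/\ A != set0,
      forall v, v \in A -> good v,
      forall u v, u \in A -> v \in A ->
        connect (fun x y => [&& badj x y, x \in A & y \in A]) u v
    & forall u v, u \in A -> badj u v -> good v -> v \in A].

End Lattice.

From mathcomp Require Import all_boot all_algebra zify.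
From mathcomp Require Import boolp.
Import GRing.Theory.

Set Implicit Arguments.
Unset Strict Implicit.
Unset Printing Implicit Defensive.

(** Let R be the set of qubits in the blocks of A and W the group of Paulis
  of the centralizer of <M_b> supported in R.  A generator of M_b has its
  support within distance d of a single qubit, so if it meets R it only
  reaches blocks of A and blocks adjacent to them; the latter, when outside
  A, are bad, i.e. fully depolarized.  Hence an element of the group
  generated by M_b and all single-qubit Paulis outside R that is supported
  in R already lies in <M_b>.  A non-depolarized qubit q of a block v of A
  therefore has X_q or Z_q outside that group, and duality over F_2 gives an
  element of W anticommuting with it, hence acting on v.  Translating by this
  element maps the elements of W avoiding v injectively to elements acting on
  v, so at least half of W acts on each block of A; averaging over W yields
  an element acting on at least half of the blocks of A. *)

Local Notation I1 := (false, false).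

Section PauliGroup.
Variables D L : nat.
Local Notation site := (site D L).
Local Notation pauli := (pauli D L).
Local Notation pid := (pid D L).
Implicit Types (s P R h : pauli) (q r : site).

Lemma pmulC P R : pmul P R = pmul R P.
Proof. by apply/ffunP => q; rewrite !ffunE addbC [_ (+) (R q).2]addbC. Qed.

Lemma pmulK P R : pmul (pmul P R) R = P.
Proof. by apply/ffunP => q; rewrite !ffunE /= -!addbA !addbb !addbF; case: (P q). Qed.

Lemma pmulKl P R : pmul P (pmul P R) = R.
Proof. by rewrite pmulC [pmul P R]pmulC pmulK. Qed.

Lemma pmul_eq1 P R q : (pmul P R q == I1) = (P q == R q).
Proof. by rewrite ffunE; case: (P q) => [[] []]; case: (R q) => [[] []]. Qed.

Lemma pmul_supp P R q : pmul P R q != I1 -> P q != I1 \/ R q != I1.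
Proof. by rewrite ffunE; case: (P q) => [[] []]; case: (R q) => [[] []]; auto. Qed.

Lemma sympl_sym P R : sympl P R = sympl R P.
Proof. by apply: eq_bigr => q _; rewrite addbC; congr addb; exact: andbC. Qed.

Lemma sympl_mulr s P R : sympl s (pmul P R) = sympl s P (+) sympl s R.
Proof.
rewrite /sympl -big_split /=; apply: eq_bigr => q _; rewrite !ffunE /=.
by case: (s q) => [[] []]; case: (P q) => [[] []]; case: (R q) => [[] []].
Qed.

Lemma sympl_mull s1 s2 P : sympl (pmul s1 s2) P = sympl s1 P (+) sympl s2 P.
Proof. by rewrite sympl_sym sympl_mulr !(sympl_sym P). Qed.

Lemma sympl_pid s : sympl s pid = false.
Proof. by rewrite /sympl big1 // => q _; rewrite ffunE /= !andbF. Qed.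

Lemma sympl_X s r : sympl s (Xop r) = (s r).2.
Proof.
rewrite /sympl (bigD1 r) //= big1 ?addbF => [|q /negbTE qr]; rewrite !ffunE /= ?qr.
  by rewrite eqxx andbF andbT.
by rewrite !andbF.
Qed.

Lemma sympl_Z s r : sympl s (Zop r) = (s r).1.
Proof.
rewrite /sympl (bigD1 r) //= big1 ?addbF => [|q /negbTE qr]; rewrite !ffunE /= ?qr.
  by rewrite eqxx andbF andbT addbF.
by rewrite !andbF.
Qed.

Lemma commute_XZ s r : pcommute s (Xop r) && pcommute s (Zop r) = (s r == I1).
Proof. by rewrite /pcommute sympl_X sympl_Z; case: (s r) => [[] []]. Qed.

Lemma centralizer_gen S s : (forall P, S P -> pcommute s P) -> in_centralizer (gen S) s.
Proof.
move=> sS P; elim=> [|R /sS //|R Q _ sR _ sQ]; first by rewrite /pcommute sympl_pid.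
by move: sR sQ; rewrite /pcommute sympl_mulr; case: sympl; case: sympl.
Qed.

Definition pauli_at q (c : bool * bool) : pauli := [ffun r => if r == q then c else I1].

Lemma gen_pauli_at S q c : gen S (Xop q) -> gen S (Zop q) -> gen S (pauli_at q c).
Proof.
move=> gX gZ.
have -> : pauli_at q c = pmul (if c.1 then Xop q else pid) (if c.2 then Zop q else pid).
  by apply/ffunP => r; case: c => [[] []]; rewrite /= !ffunE; case: (r == q).
by apply: gen_mul; case: ifP => _ //; exact: gen_id.
Qed.

Lemma gen_of_supp S P :
  (forall q, P q != I1 -> gen S (Xop q) /\ gen S (Zop q)) -> gen S P.
Proof.
suff gen_seq (l : seq site) (Q : pauli) : (forall q, Q q != I1 -> q \in l) ->
    (forall q, Q q != I1 -> gen S (Xop q) /\ gen S (Zop q)) -> gen S Q.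
  by apply: (gen_seq (enum site)) => q _; rewrite mem_enum.
elim: l Q => [|q0 l IH] {}P Pl PS.
  have -> : P = pid; last exact: gen_id.
  by apply/ffunP => q; rewrite ffunE; apply/eqP/contraT => /Pl.
set c := pauli_at q0 (P q0).
have P'E q : pmul P c q = if q == q0 then I1 else P q.
  by rewrite !ffunE; case: eqP => [->|_]; rewrite ?addbb ?addbF //; case: (P q).
rewrite -(pmulK P c); apply: gen_mul.
  apply: IH => q; rewrite P'E; case: (eqVneq q q0) => // qq0 Pq.
    by move: (Pl q Pq); rewrite inE (negbTE qq0).
  exact: PS.
have [P0|/PS [gX gZ]] := eqVneq (P q0) I1; last exact: gen_pauli_at.
rewrite /c P0; have -> : pauli_at q0 I1 = pid; last exact: gen_id.
by apply/ffunP => q; rewrite !ffunE; case: ifP.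
Qed.

Lemma gen_of_agree S h P : gen S h ->
  (forall q, h q != P q -> gen S (Xop q) /\ gen S (Zop q)) -> gen S P.
Proof.
move=> gh hP; rewrite -(pmulKl h P); apply: gen_mul => //.
by apply: gen_of_supp => q; rewrite pmul_eq1; exact: hP.
Qed.

Lemma card_half_supp_at (W : {set pauli}) sv q0 :
  {in W &, forall s1 s2, pmul s1 s2 \in W} -> sv \in W -> sv q0 != I1 ->
  #|W| <= 2 * #|[set s in W | s q0 != I1]|.
Proof.
move=> Wmul svW svq0; set B := [set s in W | s q0 != I1].
rewrite -(cardsID [set s : pauli | s q0 != I1] W).
have -> : W :&: [set s : pauli | s q0 != I1] = B by apply/setP => s; rewrite !inE.
rewrite mul2n -addnn leq_add2l.
have inj : injective (fun s : pauli => pmul s sv).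
  by move=> x y /(congr1 (fun s => pmul s sv)); rewrite !pmulK.
rewrite -(card_imset _ inj); apply/subset_leq_card/subsetP => _ /imsetP [s + ->].
rewrite !inE negbK => /andP [/eqP sq0 sW].
by rewrite Wmul // ffunE sq0; case: (sv q0) svq0 => [[] []].
Qed.

(** Paulis are identified with row vectors over F_2; those commuting with all
  of S are read off the cokernel of the matrix whose rows are the vectors of S. *)
Section SymplecticDuality.
Local Open Scope ring_scope.

Definition b2F (b : bool) : 'F_2 := b%:R.

Lemma b2F_add a c : b2F (a (+) c) = b2F a + b2F c.
Proof. by case: a; case: c; rewrite /b2F /= ?addr0 ?add0r //; apply: val_inj. Qed.

Lemma b2F_and a c : b2F (a && c) = b2F a * b2F c.
Proof. by case: a; case: c; rewrite /b2F /= ?mulr0 ?mul0r ?mulr1. Qed.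

Lemma F2_cases (x : 'F_2) : x = 0 \/ x = 1.
Proof. by case: x => [[|[|]]] //= H; [left | right]; apply: val_inj. Qed.

Lemma b2F_eq1 (x : 'F_2) : b2F (x == 1) = x.
Proof. by case: (F2_cases x) => ->. Qed.

Lemma b2F_inj : injective b2F.
Proof. by case; case => // /(congr1 val). Qed.

Let N := #|{: site * bool}|.

Definition coord P (x : site * bool) : bool := if x.2 then (P x.1).2 else (P x.1).1.
Definition vec P : 'rV['F_2]_N := \row_j b2F (coord P (enum_val j)).
Definition pauli_of_col (c : 'cV['F_2]_N) : pauli :=
  [ffun q => (c (enum_rank (q, true)) 0 == 1, c (enum_rank (q, false)) 0 == 1)].

Lemma vec_pid : vec pid = 0.
Proof. by apply/rowP => j; rewrite !mxE /coord ffunE; case: (enum_val j) => q []. Qed.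

Lemma vec_mul P R : vec (pmul P R) = vec P + vec R.
Proof.
by apply/rowP => j; rewrite !mxE /coord ffunE; case: (enum_val j) => q [] /=; rewrite b2F_add.
Qed.

Lemma vec_inj : injective vec.
Proof.
move=> P R /rowP e; apply/ffunP => q.
move: (e (enum_rank (q, true))) (e (enum_rank (q, false))).
rewrite !mxE !enum_rankK /coord /= => /b2F_inj e2 /b2F_inj e1.
by move: e1 e2; case: (P q) => ? ?; case: (R q) => ? ? /= -> ->.
Qed.

Lemma vec_mul_col P c : (vec P *m c) 0 0 = b2F (sympl (pauli_of_col c) P).
Proof.
rewrite mxE /sympl (big_morph b2F b2F_add (erefl (b2F false))).
pose g x := b2F (coord P x) * b2F (c (enum_rank x) 0 == 1).
transitivity (\sum_(j < N) g (enum_val j)).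
  by apply: eq_bigr => j _; rewrite /g mxE enum_valK b2F_eq1.
transitivity (\sum_(x in predT) g x); first by rewrite (big_enum_val (A := predT) g).
transitivity (\sum_(q : site) \sum_(b : bool) g (q, b)).
  by rewrite pair_big /=; apply: eq_big => // -[].
apply: eq_bigr => q _.
rewrite big_bool /g /coord /= b2F_add !b2F_and !ffunE /=.
by rewrite [b2F (P q).2 * _]mulrC [b2F (P q).1 * _]mulrC.
Qed.

Lemma mulmx_col_entry (R : pzSemiRingType) m n p (A : 'M[R]_(m, n)) (B : 'M_(n, p)) i j :
  (A *m col j B) i 0 = (A *m B) i j.
Proof. by rewrite colE mulmxA -colE mxE. Qed.

Lemma gen_separation S X : ~ gen S X ->
  exists s, (forall P, S P -> pcommute s P) /\ sympl s X.
Proof.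
move=> nX.
pose M := \matrix_(i < #|{: pauli}|) (if `[< S (enum_val i) >] then vec (enum_val i) else 0).
have span_gen w : (w <= M)%MS -> exists2 P, gen S P & w = vec P.
  case/submxP => a ->; rewrite mulmx_sum_row.
  apply: (big_ind (fun v => exists2 P, gen S P & v = vec P)).
  - by exists pid; [exact: gen_id | rewrite vec_pid].
  - by move=> _ _ [P1 g1 ->] [P2 g2 ->]; exists (pmul P1 P2); [exact: gen_mul | rewrite vec_mul].
  move=> i _; rewrite rowK.
  have [SP | _] := asboolP (S (enum_val i)).
    by case: (F2_cases (a 0 i)) => ->; rewrite ?scale0r ?scale1r;
      [exists pid; [exact: gen_id | rewrite vec_pid] | exists (enum_val i) => //; exact: gen_gen].
  by exists pid; [exact: gen_id | rewrite scaler0 vec_pid].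
have [j Xj] : exists j, (vec X *m cokermx M) 0 j != 0.
  apply/existsP; apply: contraT; rewrite negb_exists => /forallP Xc.
  have : (vec X <= M)%MS.
    by rewrite submxE; apply/eqP/rowP => k; rewrite [RHS]mxE; apply/eqP/negbNE/Xc.
  by case/span_gen => P gP /vec_inj eXP; case: nX; rewrite eXP.
exists (pauli_of_col (col j (cokermx M))); split.
  move=> P SP; rewrite /pcommute; apply/negP => anti.
  have rowP' : vec P = row (enum_rank P) M.
    by rewrite rowK enum_rankK; case: asboolP.
  have := vec_mul_col P (col j (cokermx M)).
  by rewrite mulmx_col_entry rowP' -row_mul mulmx_coker anti !mxE.
by apply: contraTT Xj => /negbTE anti; rewrite -mulmx_col_entry vec_mul_col anti.
Qed.

End SymplecticDuality.

End PauliGroup.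

Section LightCone.
Variables D L : nat.
Local Notation site := (site D L).
Local Notation pauli := (pauli D L).
Implicit Types (P : pauli) (i q r : site) (l : seq (gate D L)).

Definition within k q r : bool := [forall j, (q j <= r j + k) && (r j <= q j + k)].

Lemma within_refl k q : within k q q.
Proof. by apply/forallP => j; rewrite leq_addr. Qed.

Lemma within_sym k q r : within k q r = within k r q.
Proof. by apply/forallP/forallP => h j; rewrite andbC; exact: h. Qed.

Lemma within_trans k m i q r : within k i q -> within m q r -> within (k + m) i r.
Proof. by move=> /forallP iq /forallP qr; apply/forallP => j; move: (iq j) (qr j); lia. Qed.

Lemma within_leq k m q r : k <= m -> within k q r -> within m q r.
Proof. by move=> km /forallP qr; apply/forallP => j; move: (qr j); lia. Qed.

Lemma nn_within1 q r : nn q r -> within 1 q r.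
Proof.
case/existsP => j0 /andP [qr0 /forallP qr]; apply/forallP => j.
have [-> | jj0] := eqVneq j j0; first by case/orP: qr0 => /eqP <-; lia.
by move/implyP: (qr j) => /(_ jj0) /eqP ->; lia.
Qed.

Lemma clifford2_zero f : clifford2 f -> f (I1, I1) = (I1, I1).
Proof.
case=> fadd _ _; have := fadd (I1, I1) (I1, I1).
by case: (f _) => [[a c] [e g]] [-> -> -> ->]; rewrite !addbb.
Qed.

Lemma within1_gate g q r : valid_gate g ->
  q \in gate_support g -> r \in gate_support g -> within 1 q r.
Proof.
case=> g12 _; rewrite !inE => /orP [] /eqP -> /orP [] /eqP ->;
  by [exact: within_refl | exact: nn_within1 | rewrite within_sym; exact: nn_within1].
Qed.

Lemma layer_act_notin l P q :
  all (fun g => q \notin gate_support g) l -> layer_act l P q = P q.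
Proof.
elim: l => //= g l IH /andP [qg ql]; rewrite ffunE -IH //.
by move: qg; rewrite !inE negb_or => /andP [/negbTE -> /negbTE ->].
Qed.

Lemma layer_act_supp l P q : valid_layer l ->
  layer_act l P q != I1 -> exists2 r, P r != I1 & within 1 q r.
Proof.
elim: l => [_ Pq|g l IH [[vg vl] /= /andP [dis pw]]]; first by exists q; last exact: within_refl.
have layer_gate r : r \in gate_support g -> layer_act l P r = P r.
  move=> rg; apply: layer_act_notin; apply: sub_all dis => h /disjointFr.
  by move=> /(_ r rg) ->.
have [qg | qg] := boolP (q \in gate_support g); last first.
  by rewrite ffunE; move: qg; rewrite !inE negb_or => /andP [/negbTE -> /negbTE ->]; exact: IH.
rewrite /gate_act ffunE; set w := gmap g _ => Pq.
have {Pq} : w != (I1, I1).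
  apply: contraNneq Pq => ->.
  by move: qg; rewrite !inE => /orP [] /eqP ->; rewrite ?eqxx //; case: ifP.
have g1 : gq1 g \in gate_support g by rewrite !inE eqxx.
have g2 : gq2 g \in gate_support g by rewrite !inE eqxx orbT.
rewrite /w; case: (eqVneq (layer_act l P (gq1 g)) I1) => [e1 | n1].
  case: (eqVneq (layer_act l P (gq2 g)) I1) => [e2 | n2].
    by case: vg => _ /clifford2_zero; rewrite e1 e2 => ->; rewrite eqxx.
  by exists (gq2 g); [rewrite -layer_gate | exact: within1_gate vg qg g2].
by exists (gq1 g); [rewrite -layer_gate | exact: within1_gate vg qg g1].
Qed.

Lemma heis_supp d U t P i k : valid_circuit d U -> t <= d ->
  (forall q, P q != I1 -> within k i q) ->
  forall q, heis U t P q != I1 -> within (k + t) i q.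
Proof.
move=> vc; elim: t P k => [|t IH] P k td Pk /=; first by rewrite addn0.
rewrite -addSnnS; apply: IH => [|q]; first exact: ltnW.
case/(layer_act_supp (vc _ _)) => [|r /Pk ir rq]; first by rewrite td.
by rewrite -addn1 (within_trans ir) // within_sym.
Qed.

Lemma Mb_supp_within d U (b : {set site * 'I_d.+1}) P q r : valid_circuit d U -> Mb U b P ->
  P q != I1 -> P r != I1 -> within (2 * d) q r.
Proof.
move=> vc [i [t [_ eP]]] Pq Pr.
have td : t <= d by rewrite -ltnS.
have XZ_supp x : x = Xop i \/ x = Zop i -> forall q, x q != I1 -> within 0 i q.
  by case=> -> q'; rewrite ffunE; case: (eqVneq q' i) => [->|] // _; rewrite within_refl.
have cone q' : P q' != I1 -> within t i q'.
  by case: eP => ->; apply: (heis_supp (k := 0) vc td); apply: XZ_supp; [left | right].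
apply: within_leq (within_trans _ (cone _ Pr)); last by rewrite within_sym; exact: cone.
by rewrite mul2n -addnn leq_add.
Qed.

End LightCone.

Section Blocks.
Variables D K s : nat.
Local Notation site := (site D (K * s)).
Implicit Types (q r : site) (v : block D K).

Lemma site_coord_div_lt q j : q j %/ s < K.
Proof.
move: (ltn_ord (q j)); move: (nat_of_ord (q j)) => x.
by case: (posnP s) => [-> | s_gt0]; [rewrite muln0 | rewrite ltn_divLR].
Qed.

Definition block_of q : block D K := [ffun j => Ordinal (site_coord_div_lt q j)].

Lemma inblockE v q : inblock s v q = (v == block_of q).
Proof.
apply/forallP/eqP => [vq | -> j]; last by rewrite ffunE.
by apply/ffunP => j; apply: val_inj; rewrite ffunE /=; apply/esym/eqP.
Qed.

Lemma block_of_within q r : within s q r ->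
  block_of q = block_of r \/ badj (block_of q) (block_of r).
Proof.
move=> /forallP qr; have [-> | ne] := eqVneq (block_of q) (block_of r); [by left | right].
have div_step m n : m <= n + s -> m %/ s <= (n %/ s).+1.
  case: (posnP s) => [-> | s_gt0]; first by rewrite !divn0.
  by move/(leq_div2r s); rewrite -addn1 -(divnDMl 1 n s_gt0) mul1n.
rewrite /badj ne; apply/forallP => j; rewrite !ffunE /=.
by case/andP: (qr j) => /div_step -> /div_step ->.
Qed.

End Blocks.

Lemma card_set_in_sum (T : finType) (X : {set T}) (p : pred T) :
  #|[set x in X | p x]| = \sum_(x in X) p x.
Proof.
rewrite -sum1_card big_mkcond [RHS]big_mkcond /=.
by apply: eq_bigr => x _; rewrite !inE; case: (x \in X); case: (p x).
Qed.

Lemma exists_half_incident (T I : finType) (W : {set T}) (A : {set I}) (rel : T -> I -> bool) :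
  W != set0 -> (forall v, v \in A -> #|W| <= 2 * #|[set s in W | rel s v]|) ->
  exists2 s, s \in W & #|A| <= 2 * #|[set v in A | rel s v]|.
Proof.
move=> W0 half.
have [/exists_inP [s sW hs] | ] :=
  boolP [exists s in W, #|A| <= 2 * #|[set v in A | rel s v]|]; first by exists s.
rewrite negb_exists_in => /forall_inP few; exfalso.
have double_count : \sum_(s in W) #|[set v in A | rel s v]| =
                    \sum_(v in A) #|[set s in W | rel s v]|.
  under eq_bigr do rewrite card_set_in_sum.
  under [RHS]eq_bigr do rewrite card_set_in_sum.
  exact: exchange_big.
have upper : \sum_(s in W) (2 * #|[set v in A | rel s v]| + 1) <= #|W| * #|A|.
  by rewrite -sum_nat_const; apply: leq_sum => s sW; rewrite addn1 ltnNge few.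
have lower : #|A| * #|W| <= 2 * \sum_(v in A) #|[set s in W | rel s v]|.
  by rewrite -sum_nat_const big_distrr; apply: leq_sum => v /half.
move: upper lower; rewrite big_split sum1_card -big_distrr /= double_count.
by have := W0; rewrite -card_gt0 mulnC; lia.
Qed.

Section Centralizer.
Variables D K d : nat.
Local Notation L := (K * (2 * d)).
Local Notation site := (site D L).
Local Notation pauli := (pauli D L).
Local Notation blk := (@block_of D K (2 * d)).
Variable U : nat -> seq (gate D L).
Variable b : {set site * 'I_d.+1}.
Variable A : {set block D K}.
Hypothesis vc : valid_circuit d U.
Hypothesis compA : is_component (good_block U b (2 * d)) A.
Local Notation H := (gen (Mb U b)).
Implicit Types (s P h X : pauli) (q r : site).

Definition inA q : bool := blk q \in A.
Definition nearA q : Prop := exists2 u, u \in A & (blk q = u \/ badj u (blk q)).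
Definition Mb_out P : Prop := Mb U b P \/ exists2 r, ~~ inA r & (P = Xop r \/ P = Zop r).

Lemma gen_Mb_out_local P : gen Mb_out P ->
  exists2 h, H h & (forall q, inA q -> h q = P q) /\ (forall q, h q != I1 -> nearA q).
Proof.
elim=> [|{}P [MP | [r rA eP]] | P1 P2 _ [h1 g1 [a1 n1]] _ [h2 g2 [a2 n2]]].
- by exists (pid D L); [exact: gen_id | split => // q; rewrite ffunE].
- have [/existsP [q0 /andP [q0A Pq0]] | noA] := boolP [exists q, inA q && (P q != I1)].
    exists P; [exact: gen_gen | split => // q Pq].
    exists (blk q0) => //.
    by case: (block_of_within (Mb_supp_within vc MP Pq0 Pq)) => [->|]; [left | right].
  exists (pid D L); [exact: gen_id | split => [q qA | q]; rewrite ffunE //].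
  by apply/esym/eqP; apply: contraNT noA => Pq; apply/existsP; exists q; rewrite qA.
- exists (pid D L); [exact: gen_id | split => [q qA | q]; rewrite ffunE //].
  have qr : q != r by apply: contraNneq rA => <-.
  by case: eP => ->; rewrite ffunE (negbTE qr).
- exists (pmul h1 h2); [exact: gen_mul | split => [q qA | q]].
    by rewrite !ffunE a1 // a2.
  by case/pmul_supp => [/n1 | /n2].
Qed.

Lemma bad_block_depolarized (w : block D K) q :
  ~ good_block U b (2 * d) w -> inblock (2 * d) w q -> depolarized U b q.
Proof. by move=> nw wq; apply: contrapT => nd; apply: nw; exists q. Qed.

Lemma gen_Mb_out_inA P : (forall q, P q != I1 -> inA q) -> gen Mb_out P -> H P.
Proof.
move=> PA /gen_Mb_out_local [h gh [agree near]].
apply: (gen_of_agree gh) => q hPq.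
have qA : ~~ inA q by apply: contra hPq => /agree ->.
have Pq : P q = I1 by apply/eqP/contraT => /PA; rewrite (negbTE qA).
have [u uA [equ | adj]] : nearA q by apply: near; rewrite -Pq.
  by move: qA; rewrite /inA equ uA.
apply: (@bad_block_depolarized (blk q)); last by rewrite inblockE.
by move=> gq; case: compA => _ _ _ /(_ u _ uA adj gq); apply/negP.
Qed.

Definition centA : {set pauli} :=
  [set s | `[< in_centralizer H s /\ forall q, s q != I1 -> inA q >]].

Lemma centA_mul : {in centA &, forall s1 s2, pmul s1 s2 \in centA}.
Proof.
move=> s1 s2; rewrite !inE => /asboolP [c1 A1] /asboolP [c2 A2]; apply/asboolP; split.
  by move=> P HP; move: (c1 P HP) (c2 P HP); rewrite /pcommute sympl_mull; case: sympl; case: sympl.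
by move=> q /pmul_supp [/A1 | /A2].
Qed.

Lemma centA_acts_on_block v : v \in A ->
  exists q, inblock (2 * d) v q /\ exists2 s, s \in centA & s q != I1.
Proof.
move=> vA; case: compA => _ good _ _; have [q [vq nd]] := good v vA.
exists q; split => //.
have [X eX nX] : exists2 X, X = Xop q \/ X = Zop q & ~ gen Mb_out X.
  have [gX|] := pselect (gen Mb_out (Xop q)); last by exists (Xop q); [left |].
  have [gZ|] := pselect (gen Mb_out (Zop q)); last by exists (Zop q); [right |].
  have qA : inA q by rewrite /inA -(eqP (_ : v == blk q)) // -inblockE.
  by case: nd; split; apply: gen_Mb_out_inA => // r; rewrite ffunE; case: (eqVneq r q) => [->|].
have [s [sMb sX]] := gen_separation nX.
exists s.
  rewrite inE; apply/asboolP; split.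
    by apply: centralizer_gen => P MP; apply: sMb; left.
  move=> r; apply: contraTT => rA; rewrite negbK -commute_XZ.
  by apply/andP; split; apply: sMb; right; exists r => //; [left | right].
by apply: contraTneq sX => sq; case: eX => ->; rewrite ?sympl_X ?sympl_Z sq.
Qed.

Lemma exists_centA_half : exists2 s, s \in centA &
  #|A| <= 2 * #|[set v in A | [exists q, (q \in supp s) && inblock (2 * d) v q]]|.
Proof.
apply: exists_half_incident => [|v /centA_acts_on_block [q [vq [s sC sq]]]].
  apply/set0Pn; exists (pid D L); rewrite inE; apply/asboolP; split => [P _ | q].
    by rewrite /pcommute sympl_sym sympl_pid.
  by rewrite ffunE.
apply: leq_trans (card_half_supp_at centA_mul sC sq) _.
rewrite leq_mul2l; apply/orP; right; apply/subset_leq_card/subsetP => s'.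
by rewrite !inE => /andP [-> s'q]; apply/existsP; exists q; rewrite inE s'q vq.
Qed.

End Centralizer.

Theorem lemma3 (D K d : nat)
  (U : nat -> seq (gate D (K * (2 * d))))
  (b : {set site D (K * (2 * d)) * 'I_d.+1})
  (A : {set block D K}) :
  valid_circuit d U ->
  @is_component D K (@good_block D _ K d U b (2 * d)) A ->
  (forall A', @is_component D K (@good_block D _ K d U b (2 * d)) A' -> #|A'| <= #|A|) ->
  exists s : pauli D (K * (2 * d)),
    [/\ in_centralizer (gen (Mb U b)) s,
        forall q, q \in supp s -> exists2 v, v \in A & inblock (2 * d) v q
      & #|A| <= 2 * #|[set v in A | [exists q, (q \in supp s) && inblock (2 * d) v q]]|].
Proof.
(* Any component of good blocks works. *)
move=> vc compA _.
have [s sC half] := exists_centA_half vc compA.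
move: sC; rewrite inE => /asboolP [sH s_inA].
exists s; split => // q; rewrite inE => /s_inA qA.
by exists (@block_of D K (2 * d) q) => //; rewrite inblockE.
Qed.
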